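(* Let $0<p<1$ and $\alpha>-1$, and consider the urn transfer process described in the context (the $p_k$-model), assumed well defined, i.e. $0\le p_{k+1}\le1$ at every stage. Let $\beta=\frac{1-p}{1+\alpha p}$ and define $(f_i)_{i\ge1}$ by $$f_1=\frac{p}{1+\beta(1+\alpha)},\qquad f_i=\frac{\beta(i-1+\alpha)}{1+\beta(i+\alpha)}\,f_{i-1}\quad(i>1).$$ Then for every $i\ge1$, $$\lim_{k\to\infty}\frac{E(F_i(k))}{k}=f_i.$$
   Context: Urn transfer model ($p_k$-model). There are countably many urns $urn_1,urn_2,\dots$; each ball in $urn_i$ carries $i$ pins. Let $F_i(k)$ be the number of balls in $urn_i$ after $k$ steps. Initially $F_1(1)=1$ and $F_i(1)=0$ for $i>1$. At stage $k+1$ ($k\ge1$): (i) with probability $$p_{k+1}=1-\frac{(1-p)\sum_{i=1}^k (i+\alpha)F_i(k)}{k(1+\alpha p)+\alpha(1-p)},$$ a new ball is added to $urn_1$; (ii) with probability $1-p_{k+1}$, $urn_i$ is chosen with probability $\frac{(1-p)(i+\alpha)F_i(k)}{k(1+\alpha p)+\alpha(1-p)}$ ($1\le i\le k$), and one ball from $urn_i$ is transferred to $urn_{i+1}$. The process is only defined when $0\le p_{k+1}\le1$ at each stage. $E$ denotes expectation over the randomness of the process. *)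

From Stdlib Require Import Reals List.
From Coquelicot Require Import Coquelicot.
Open Scope R_scope.

(* A configuration: F i = number of balls in urn_i (urns indexed from 1). *)
Definition state := nat -> nat.

Definition init_state : state := fun i => if Nat.eqb i 1 then 1%nat else 0%nat.

Definition sumR (l : list R) : R := fold_right Rplus 0 l.

Definition denom (p alpha : R) (k : nat) : R := INR k * (1 + alpha * p) + alpha * (1 - p).

(* probability that urn_i is chosen (for transfer) at stage k+1, given F(k) *)
Definition choose_prob (p alpha : R) (k : nat) (F : state) (i : nat) : R :=
  (1 - p) * (INR i + alpha) * INR (F i) / denom p alpha k.

Definition p_next (p alpha : R) (k : nat) (F : state) : R :=
  1 - sumR (map (choose_prob p alpha k F) (seq 1 k)).

Definition add_ball (F : state) : state :=
  fun j => if Nat.eqb j 1 then S (F j) else F j.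

Definition transfer (F : state) (i : nat) : state :=
  fun j => if Nat.eqb j i then pred (F j)
           else if Nat.eqb j (S i) then S (F j) else F j.

(* One stage k -> k+1 acting on a finitely supported distribution
   (list of (probability weight, configuration)). *)
Definition step (p alpha : R) (k : nat) (d : list (R * state)) : list (R * state) :=
  flat_map (fun wF : R * state =>
              let (w, F) := wF in
              (w * p_next p alpha k F, add_ball F)
                :: map (fun i => (w * choose_prob p alpha k F i, transfer F i)) (seq 1 k))
           d.

(* urn_dist p alpha n = law of the configuration after step k = n+1. *)
Fixpoint urn_dist (p alpha : R) (n : nat) : list (R * state) :=
  match n with
  | O => (1, init_state) :: nil
  | S m => step p alpha (S m) (urn_dist p alpha m)
  end.

Definition expect (i : nat) (d : list (R * state)) : R :=
  sumR (map (fun wF : R * state => fst wF * INR (snd wF i)) d).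

Definition well_defined (p alpha : R) : Prop :=
  forall (n : nat) (w : R) (F : state),
    In (w, F) (urn_dist p alpha n) -> 0 < w ->
    0 <= p_next p alpha (S n) F <= 1.

Definition beta (p alpha : R) : R := (1 - p) / (1 + alpha * p).

(* fpos p alpha n = f_{n+1} *)
Fixpoint fpos (p alpha : R) (n : nat) : R :=
  match n with
  | O => p / (1 + beta p alpha * (1 + alpha))
  | S m => beta p alpha * (INR (S (S m)) - 1 + alpha)
           / (1 + beta p alpha * (INR (S (S m)) + alpha)) * fpos p alpha m
  end.

Definition f_lim (p alpha : R) (i : nat) : R := fpos p alpha (i - 1).

From Stdlib Require Import Reals List Lia Lra.
From Coquelicot Require Import Coquelicot.
Open Scope R_scope.

(* Taking expectations turns the process into a linear recursion for
   m_i(k) = E F_i(k): with a_i(k) = (1-p)(i+alpha)/(k(1+alpha p)+alpha(1-p)),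
     m_i(k+1) = (1 - a_i(k)) m_i(k) + a_{i-1}(k) m_{i-1}(k),
   and urn_1 additionally gains 1 - sum_i a_i(k) m_i(k) per step.  Two
   conservation laws, sum_i i m_i(k) = k (each step adds one pin) and
   sum_i m_i(k) = p(k-1) + 1, make that gain exactly p.  Since k a_i(k) tends to
   beta (i+alpha), the elementary fact that x(k+1) = (1 - s_k) x(k) + c_k with
   k s_k -> b and c_k -> c forces x(k)/k -> c/(1+b) gives the limits f_i by
   induction on i. *)

Lemma INR_S_pos (n : nat) : 0 < INR (S n).
Proof. apply lt_0_INR; lia. Qed.

Lemma is_lim_seq_inv_INR_S : is_lim_seq (fun n => / INR (S n)) 0.
Proof.
  apply (is_lim_seq_incr_1 (fun n => / INR n) 0).
  apply (is_lim_seq_inv INR p_infty); [exact is_lim_seq_INR | discriminate].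
Qed.

Lemma sublinear_of_vanishing_increments (z e : nat -> R) (N : nat) :
  (forall n, (N <= n)%nat -> Rabs (z (S n)) <= Rabs (z n) + e n) ->
  is_lim_seq e 0 ->
  is_lim_seq (fun n => z n / INR (S n)) 0.
Proof.
  intros Hinc He. apply is_lim_seq_spec. intros eps.
  set (eps2 := pos_div_2 eps).
  apply is_lim_seq_spec in He. destruct (He eps2) as [N1 HN1].
  set (M := (N + N1)%nat).
  assert (Hgrowth : forall t, Rabs (z (M + t)%nat) <= Rabs (z M) + INR t * eps2).
  { induction t as [|t IH].
    - rewrite Nat.add_0_r. simpl. lra.
    - rewrite Nat.add_succ_r, S_INR.
      specialize (Hinc (M + t)%nat ltac:(lia)).
      specialize (HN1 (M + t)%nat ltac:(lia)).
      rewrite Rminus_0_r in HN1. apply Rabs_def2 in HN1. lra. }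
  assert (Hinit : is_lim_seq (fun n => Rabs (z M) * / INR (S n)) 0).
  { rewrite <- (Rmult_0_r (Rabs (z M))).
    exact (is_lim_seq_scal_l _ (Rabs (z M)) _ is_lim_seq_inv_INR_S). }
  apply is_lim_seq_spec in Hinit. destruct (Hinit eps2) as [N2 HN2].
  exists (M + N2)%nat. intros n Hn.
  specialize (HN2 n ltac:(lia)).
  pose proof (INR_S_pos n) as Hpos.
  rewrite Rminus_0_r, Rabs_pos_eq in HN2
    by (apply Rmult_le_pos; [apply Rabs_pos | left; apply Rinv_0_lt_compat; lra]).
  assert (HM : Rabs (z M) < eps2 * INR (S n)) by (apply Rlt_div_l; [lra | exact HN2]).
  specialize (Hgrowth (n - M)%nat).
  replace (M + (n - M))%nat with n in Hgrowth by lia.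
  assert (Ht : INR (n - M) <= INR (S n)) by (apply le_INR; lia).
  rewrite Rminus_0_r, Rabs_div, (Rabs_pos_eq (INR (S n))) by lra.
  apply Rlt_div_l; [lra|].
  assert (INR (n - M) * eps2 <= INR (S n) * eps2)
    by (apply Rmult_le_compat_r; [left; apply cond_pos | exact Ht]).
  unfold eps2 in *; cbn [pos_div_2 pos] in *. lra.
Qed.

Lemma linear_recurrence_limit (x s c : nat -> R) (b l L : R) (N : nat) :
  (forall n, (N <= n)%nat -> x (S n) = (1 - s n) * x n + c n) ->
  (forall n, 0 <= s n) ->
  is_lim_seq (fun n => INR (S n) * s n) b ->
  is_lim_seq c l -> L * (1 + b) = l ->
  is_lim_seq (fun n => x n / INR (S n)) L.
Proof.
  intros Hrec Hs_nonneg Hb Hc HL.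
  assert (Hs : is_lim_seq s 0).
  { rewrite <- (Rmult_0_r b).
    apply (is_lim_seq_ext (fun n => INR (S n) * s n * / INR (S n))).
    { intro n. pose proof (INR_S_pos n). field. lra. }
    exact (is_lim_seq_mult' _ _ _ _ Hb is_lim_seq_inv_INR_S). }
  set (z := fun n => x n - L * INR (S n)).
  set (e := fun n => c n - L - L * (INR (S n) * s n)).
  assert (Hz_rec : forall n, (N <= n)%nat -> z (S n) = (1 - s n) * z n + e n).
  { intros n Hn. unfold z, e. rewrite Hrec, (S_INR (S n)) by exact Hn. ring. }
  assert (He : is_lim_seq e 0).
  { replace 0 with (l - L - L * b) by (rewrite <- HL; ring).
    apply is_lim_seq_minus'; [apply is_lim_seq_minus' |].
    - exact Hc.
    - apply is_lim_seq_const.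
    - exact (is_lim_seq_scal_l _ L _ Hb). }
  apply is_lim_seq_spec in Hs. destruct (Hs (mkposreal 1 Rlt_0_1)) as [N1 Hs1].
  assert (Hz : is_lim_seq (fun n => z n / INR (S n)) 0).
  { apply (sublinear_of_vanishing_increments z (fun n => Rabs (e n)) (N + N1)).
    - intros n Hn. rewrite Hz_rec by lia.
      specialize (Hs1 n ltac:(lia)). specialize (Hs_nonneg n).
      cbn [pos] in Hs1. rewrite Rminus_0_r in Hs1. apply Rabs_def2 in Hs1.
      eapply Rle_trans; [apply Rabs_triang |].
      rewrite Rabs_mult, (Rabs_pos_eq (1 - s n)) by lra.
      pose proof (Rabs_pos (z n)). nra.
    - rewrite <- Rabs_R0. exact (is_lim_seq_abs e 0 He). }
  rewrite <- (Rplus_0_l L).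
  apply (is_lim_seq_ext (fun n => z n / INR (S n) + L)).
  { intro n. unfold z. pose proof (INR_S_pos n). field. lra. }
  exact (is_lim_seq_plus' _ _ _ _ Hz (is_lim_seq_const L)).
Qed.

Lemma is_lim_seq_INR_S_mul_ratio (K A B : R) :
  A <> 0 -> (forall n, INR (S n) * A + B <> 0) ->
  is_lim_seq (fun n => INR (S n) * (K / (INR (S n) * A + B))) (K / A).
Proof.
  intros HA HD.
  apply (is_lim_seq_ext (fun n => K * / (A + B * / INR (S n)))).
  { intro n. pose proof (INR_S_pos n). specialize (HD n). field. lra. }
  assert (Hden : is_lim_seq (fun n => A + B * / INR (S n)) A).
  { pose proof (is_lim_seq_plus' _ _ _ _ (is_lim_seq_const A)
                  (is_lim_seq_scal_l _ B _ is_lim_seq_inv_INR_S)) as H.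
    rewrite Rmult_0_r, Rplus_0_r in H. exact H. }
  assert (Hinv : is_lim_seq (fun n => / (A + B * / INR (S n))) (/ A)).
  { apply (is_lim_seq_inv _ A Hden). intro H. injection H. exact HA. }
  exact (is_lim_seq_scal_l _ K _ Hinv).
Qed.

Definition in_range (k i : nat) : bool := (1 <=? i)%nat && (i <=? k)%nat.

Lemma in_rangeP (k i : nat) : reflect (1 <= i <= k)%nat (in_range k i).
Proof.
  unfold in_range.
  destruct (Nat.leb_spec0 1 i), (Nat.leb_spec0 i k); constructor; lia.
Qed.

Fixpoint sum1 (f : nat -> R) (n : nat) : R :=
  match n with
  | O => 0
  | S m => sum1 f m + f (S m)
  end.

Lemma sumR_app (l1 l2 : list R) : sumR (l1 ++ l2) = sumR l1 + sumR l2.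
Proof.
  unfold sumR. induction l1 as [|a l1 IH]; cbn [app fold_right]; [ring | rewrite IH; ring].
Qed.

Lemma sumR_map_seq1 (f : nat -> R) (n : nat) : sumR (map f (seq 1 n)) = sum1 f n.
Proof.
  induction n as [|n IH]; [reflexivity |].
  rewrite seq_S, map_app, sumR_app, IH. unfold sumR. cbn [sum1 map fold_right].
  rewrite Rplus_0_r. reflexivity.
Qed.

Lemma sum1_ext_in (f g : nat -> R) (n : nat) :
  (forall i, (1 <= i <= n)%nat -> f i = g i) -> sum1 f n = sum1 g n.
Proof.
  induction n as [|n IH]; intros Hfg; cbn [sum1]; [reflexivity |].
  rewrite IH, (Hfg (S n)); [reflexivity | lia |].
  intros i Hi. apply Hfg. lia.
Qed.

Lemma sum1_zero (n : nat) : sum1 (fun _ => 0) n = 0.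
Proof. induction n as [|n IH]; cbn [sum1]; [reflexivity | rewrite IH; ring]. Qed.

Lemma sum1_add (f g : nat -> R) (n : nat) :
  sum1 (fun i => f i + g i) n = sum1 f n + sum1 g n.
Proof. induction n as [|n IH]; cbn [sum1]; [ring | rewrite IH; ring]. Qed.

Lemma sum1_opp (f : nat -> R) (n : nat) : sum1 (fun i => - f i) n = - sum1 f n.
Proof. induction n as [|n IH]; cbn [sum1]; [ring | rewrite IH; ring]. Qed.

Lemma sum1_scal (c : R) (f : nat -> R) (n : nat) :
  sum1 (fun i => c * f i) n = c * sum1 f n.
Proof. induction n as [|n IH]; cbn [sum1]; [ring | rewrite IH; ring]. Qed.

Lemma sum1_indicator (g : nat -> R) (j n : nat) :
  sum1 (fun i => if (j =? i)%nat then g i else 0) n = if in_range n j then g j else 0.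
Proof.
  induction n as [|n IH]; cbn [sum1].
  - destruct (in_rangeP 0 j); [lia | reflexivity].
  - rewrite IH.
    destruct (Nat.eqb_spec j (S n)), (in_rangeP n j), (in_rangeP (S n) j);
      subst; try lia; ring.
Qed.

Lemma sum1_shift (f : nat -> R) (n : nat) :
  sum1 (fun i => f (i - 1)%nat) (S n) = f 0%nat + sum1 f n.
Proof.
  induction n as [|n IH]; cbn [sum1 Nat.sub] in *; [ring |].
  rewrite IH. ring.
Qed.

Definition choose_rate (p alpha : R) (k i : nat) : R :=
  (1 - p) * (INR i + alpha) / denom p alpha k.

Lemma choose_prob_rate (p alpha : R) (k : nat) (F : state) (i : nat) :
  choose_prob p alpha k F i = choose_rate p alpha k i * INR (F i).
Proof. unfold choose_prob, choose_rate, Rdiv. ring. Qed.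

Lemma p_next_rate (p alpha : R) (k : nat) (F : state) :
  p_next p alpha k F = 1 - sum1 (fun i => choose_rate p alpha k i * INR (F i)) k.
Proof.
  unfold p_next. rewrite sumR_map_seq1. f_equal.
  apply sum1_ext_in. intros i _. apply choose_prob_rate.
Qed.

Lemma INR_add_ball (F : state) (j : nat) :
  INR (add_ball F j) = INR (F j) + (if (j =? 1)%nat then 1 else 0).
Proof. unfold add_ball. destruct (j =? 1)%nat; [rewrite S_INR |]; ring. Qed.

(* [transfer] out of an empty urn truncates at 0 ([pred 0 = 0]); the hypothesis
   makes such a transfer weightless. *)
Lemma transfer_weighted (c : R) (F : state) (i j : nat) :
  (F i = 0%nat -> c = 0) ->
  c * INR (transfer F i j) =
  c * INR (F j) - (if (j =? i)%nat then c else 0) + (if (j =? S i)%nat then c else 0).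
Proof.
  intros Hempty. unfold transfer.
  destruct (Nat.eqb_spec j i) as [-> | Hji].
  - rewrite (proj2 (Nat.eqb_neq i (S i))) by lia.
    destruct (F i) as [|m].
    + rewrite Hempty by reflexivity. ring.
    + cbn [Nat.pred]. rewrite S_INR. ring.
  - destruct (Nat.eqb_spec j (S i)); [rewrite S_INR |]; ring.
Qed.

Definition successors (p alpha : R) (k : nat) (wF : R * state) : list (R * state) :=
  let (w, F) := wF in
  (w * p_next p alpha k F, add_ball F)
    :: map (fun i => (w * choose_prob p alpha k F i, transfer F i)) (seq 1 k).

Lemma step_flat_map (p alpha : R) (k : nat) (d : list (R * state)) :
  step p alpha k d = flat_map (successors p alpha k) d.
Proof. reflexivity. Qed.

Definition weight (d : list (R * state)) : R := sumR (map fst d).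

Lemma weight_app (d1 d2 : list (R * state)) : weight (d1 ++ d2) = weight d1 + weight d2.
Proof. unfold weight. rewrite map_app. apply sumR_app. Qed.

Lemma expect_app (j : nat) (d1 d2 : list (R * state)) :
  expect j (d1 ++ d2) = expect j d1 + expect j d2.
Proof. unfold expect. rewrite map_app. apply sumR_app. Qed.

Lemma weight_successors (p alpha : R) (k : nat) (w : R) (F : state) :
  weight (successors p alpha k (w, F)) = w.
Proof.
  unfold weight, successors. cbn [map fst].
  change (sumR (?a :: ?l)) with (a + sumR l).
  rewrite map_map, sumR_map_seq1, p_next_rate. cbn [fst].
  rewrite (sum1_ext_in (fun i => w * choose_prob p alpha k F i)
                       (fun i => w * (choose_rate p alpha k i * INR (F i))))
    by (intros i _; rewrite choose_prob_rate; reflexivity).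
  rewrite sum1_scal. ring.
Qed.

Lemma expect_successors (p alpha : R) (k : nat) (w : R) (F : state) (j : nat) :
  expect j (successors p alpha k (w, F)) =
  w * INR (F j) + (if (j =? 1)%nat then w * p_next p alpha k F else 0)
  - (if in_range k j then choose_rate p alpha k j * (w * INR (F j)) else 0)
  + (if in_range k (j - 1) then choose_rate p alpha k (j - 1) * (w * INR (F (j - 1)%nat))
     else 0).
Proof.
  set (g := fun i => w * (choose_rate p alpha k i * INR (F i))).
  unfold successors, expect. cbn [map fst snd].
  change (sumR (?a :: ?l)) with (a + sumR l).
  rewrite map_map, sumR_map_seq1. cbn [fst snd].
  rewrite (sum1_ext_in _ (fun i => w * INR (F j) * (choose_rate p alpha k i * INR (F i))
             + - (if (j =? i)%nat then g i else 0) + (if (j - 1 =? i)%nat then g i else 0))).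
  2:{ intros i Hi.
      rewrite transfer_weighted
        by (intros Hempty; rewrite choose_prob_rate, Hempty; cbn [INR]; ring).
      replace (j =? S i)%nat with (j - 1 =? i)%nat
        by (destruct (Nat.eqb_spec (j - 1) i), (Nat.eqb_spec j (S i)); lia).
      unfold g. rewrite choose_prob_rate.
      destruct (j =? i)%nat, (j - 1 =? i)%nat; ring. }
  rewrite !sum1_add, sum1_opp, sum1_scal, !sum1_indicator, INR_add_ball, p_next_rate.
  unfold g. destruct (j =? 1)%nat, (in_range k j), (in_range k (j - 1)); ring.
Qed.

Definition outflow (p alpha : R) (k : nat) (d : list (R * state)) (i : nat) : R :=
  if in_range k i then choose_rate p alpha k i * expect i d else 0.

Lemma outflow_out_of_range (p alpha : R) (k : nat) (d : list (R * state)) (i : nat) :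
  ~ (1 <= i <= k)%nat -> outflow p alpha k d i = 0.
Proof. intros Hi. unfold outflow. destruct (in_rangeP k i); [lia | reflexivity]. Qed.

Lemma weight_step (p alpha : R) (k : nat) (d : list (R * state)) :
  weight (step p alpha k d) = weight d.
Proof.
  rewrite step_flat_map. induction d as [|[w F] d IH]; [reflexivity |].
  cbn [flat_map]. rewrite weight_app, IH, weight_successors. reflexivity.
Qed.

Lemma expect_step (p alpha : R) (k : nat) (d : list (R * state)) (j : nat) :
  expect j (step p alpha k d) =
  expect j d + (if (j =? 1)%nat then weight d - sum1 (outflow p alpha k d) k else 0)
  - outflow p alpha k d j + outflow p alpha k d (j - 1).
Proof.
  rewrite step_flat_map. induction d as [|[w F] d IH].
  - unfold outflow, weight, expect. cbn [flat_map map sumR fold_right].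
    rewrite (sum1_ext_in _ (fun _ => 0))
      by (intros i _; destruct (in_range k i); ring).
    rewrite sum1_zero. destruct (j =? 1)%nat, (in_range k j), (in_range k (j - 1)); ring.
  - cbn [flat_map]. rewrite expect_app, IH, expect_successors.
    assert (Hout : forall i, outflow p alpha k ((w, F) :: d) i =
              (if in_range k i then choose_rate p alpha k i * (w * INR (F i)) else 0)
              + outflow p alpha k d i).
    { intros i. unfold outflow, expect. cbn [map fst snd].
      change (sumR (?a :: ?l)) with (a + sumR l).
      destruct (in_range k i); ring. }
    rewrite !Hout, (sum1_ext_in (outflow p alpha k ((w, F) :: d))
      (fun i => w * (choose_rate p alpha k i * INR (F i)) + outflow p alpha k d i)).
    2:{ intros i Hi. rewrite Hout. destruct (in_rangeP k i); [ring | lia]. }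
    rewrite sum1_add, sum1_scal, p_next_rate.
    unfold weight, expect. cbn [map fst snd].
    change (sumR (?a :: ?l)) with (a + sumR l). fold (weight d) (expect j d).
    destruct (j =? 1)%nat, (in_range k j), (in_range k (j - 1)); ring.
Qed.

Lemma sum_expect_step (p alpha : R) (k : nat) (d : list (R * state)) :
  sum1 (fun j => expect j (step p alpha k d)) (S k) =
  sum1 (fun j => expect j d) (S k) + weight d - sum1 (outflow p alpha k d) k.
Proof.
  rewrite (sum1_ext_in _ (fun j => expect j d
             + (if (1 =? j)%nat then weight d - sum1 (outflow p alpha k d) k else 0)
             + - outflow p alpha k d j + outflow p alpha k d (j - 1))).
  2:{ intros j _. rewrite expect_step, Nat.eqb_sym. ring. }
  rewrite !sum1_add, sum1_opp, sum1_shift,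
    (sum1_indicator (fun _ => weight d - sum1 (outflow p alpha k d) k)).
  cbn [sum1].
  rewrite (outflow_out_of_range p alpha k d 0), (outflow_out_of_range p alpha k d (S k)) by lia.
  destruct (in_rangeP (S k) 1); [ring | lia].
Qed.

Lemma pins_expect_step (p alpha : R) (k : nat) (d : list (R * state)) :
  sum1 (fun j => INR j * expect j (step p alpha k d)) (S k) =
  sum1 (fun j => INR j * expect j d) (S k) + weight d.
Proof.
  set (out := outflow p alpha k d).
  rewrite (sum1_ext_in _ (fun j => INR j * expect j d
             + (if (1 =? j)%nat then INR j * (weight d - sum1 out k) else 0)
             + - (INR j * out j) + INR (S (j - 1)) * out (j - 1)%nat)).
  2:{ intros j Hj. rewrite expect_step, Nat.eqb_sym. fold out.
      replace (S (j - 1)) with j by lia. destruct (1 =? j)%nat; ring. }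
  rewrite !sum1_add, sum1_opp, (sum1_shift (fun i => INR (S i) * out i)),
    (sum1_indicator (fun j => INR j * (weight d - sum1 out k))).
  rewrite (sum1_ext_in (fun i => INR (S i) * out i) (fun i => INR i * out i + out i))
    by (intros i _; rewrite S_INR; ring).
  rewrite sum1_add. cbn [sum1].
  unfold out.
  rewrite (outflow_out_of_range p alpha k d 0), (outflow_out_of_range p alpha k d (S k)) by lia.
  destruct (in_rangeP (S k) 1); [cbn [INR]; ring | lia].
Qed.

Lemma outflow_total (p alpha : R) (n : nat) (d : list (R * state)) :
  denom p alpha (S n) <> 0 ->
  sum1 (fun j => INR j * expect j d) (S n) = INR (S n) ->
  sum1 (fun j => expect j d) (S n) = p * INR n + 1 ->
  sum1 (outflow p alpha (S n) d) (S n) = 1 - p.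
Proof.
  intros Hden Hpins Hballs.
  rewrite (sum1_ext_in _ (fun i => (1 - p) / denom p alpha (S n) * (INR i * expect i d)
                                 + (1 - p) / denom p alpha (S n) * alpha * expect i d)).
  2:{ intros i Hi. unfold outflow, choose_rate.
      destruct (in_rangeP (S n) i); [unfold Rdiv; ring | lia]. }
  rewrite sum1_add, !sum1_scal, Hpins, Hballs.
  unfold denom in *. rewrite S_INR in *. field. exact Hden.
Qed.

Lemma choose_rate_nonneg (p alpha : R) (k i : nat) :
  0 < p < 1 -> -1 < alpha -> 0 < denom p alpha k -> (1 <= i)%nat ->
  0 <= choose_rate p alpha k i.
Proof.
  intros Hp Halpha Hden Hi. unfold choose_rate.
  assert (1 <= INR i) by (apply (le_INR 1); exact Hi).
  apply Rmult_le_pos; [apply Rmult_le_pos; lra | left; apply Rinv_0_lt_compat, Hden].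
Qed.

Lemma denom_pos (p alpha : R) (k : nat) :
  0 < p < 1 -> -1 < alpha -> (1 <= k)%nat -> 0 < denom p alpha k.
Proof.
  intros Hp Halpha Hk. unfold denom.
  assert (1 <= INR k) by (apply (le_INR 1); exact Hk).
  assert (0 < 1 + alpha * p) by nra.
  nra.
Qed.

Lemma is_lim_seq_scaled_choose_rate (p alpha : R) (j : nat) :
  0 < p < 1 -> -1 < alpha ->
  is_lim_seq (fun n => INR (S n) * choose_rate p alpha (S n) j) (beta p alpha * (INR j + alpha)).
Proof.
  intros Hp Halpha.
  assert (0 < 1 + alpha * p) by nra.
  replace (beta p alpha * (INR j + alpha))
    with ((1 - p) * (INR j + alpha) / (1 + alpha * p)) by (unfold beta; field; lra).
  apply (is_lim_seq_INR_S_mul_ratio _ _ (alpha * (1 - p))); [lra |].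
  intros n. pose proof (denom_pos p alpha (S n) Hp Halpha ltac:(lia)). unfold denom in *. lra.
Qed.

Lemma beta_pos (p alpha : R) : 0 < p < 1 -> -1 < alpha -> 0 < beta p alpha.
Proof.
  intros Hp Halpha. unfold beta.
  assert (0 < 1 + alpha * p) by nra.
  apply Rdiv_lt_0_compat; lra.
Qed.

Section UrnModel.

Variables p alpha : R.
Hypothesis Hp : 0 < p < 1.
Hypothesis Halpha : -1 < alpha.

Local Notation mean n j := (expect j (urn_dist p alpha n)).

Lemma urn_dist_S (n : nat) : urn_dist p alpha (S n) = step p alpha (S n) (urn_dist p alpha n).
Proof. reflexivity. Qed.

Lemma weight_urn_dist (n : nat) : weight (urn_dist p alpha n) = 1.
Proof.
  induction n as [|n IH].
  - unfold weight, sumR. cbn [urn_dist map fst fold_right]. ring.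
  - rewrite urn_dist_S, weight_step. exact IH.
Qed.

Lemma mean_urn_dist_0 (j : nat) : mean 0 j = if (j =? 1)%nat then 1 else 0.
Proof.
  unfold expect, sumR. cbn [urn_dist map fold_right fst snd]. unfold init_state.
  destruct (j =? 1)%nat; cbn [INR]; ring.
Qed.

Lemma mean_urn_dist_S (n j : nat) :
  mean (S n) j =
  mean n j + (if (j =? 1)%nat then 1 - sum1 (outflow p alpha (S n) (urn_dist p alpha n)) (S n)
              else 0)
  - outflow p alpha (S n) (urn_dist p alpha n) j
  + outflow p alpha (S n) (urn_dist p alpha n) (j - 1).
Proof. rewrite urn_dist_S, expect_step, weight_urn_dist. reflexivity. Qed.

Lemma mean_urn_dist_out_of_range (n j : nat) : ~ (1 <= j <= S n)%nat -> mean n j = 0.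
Proof.
  revert j. induction n as [|n IH]; intros j Hj.
  - rewrite mean_urn_dist_0. destruct (Nat.eqb_spec j 1); [lia | reflexivity].
  - rewrite mean_urn_dist_S, IH, !outflow_out_of_range by lia.
    destruct (Nat.eqb_spec j 1); [lia | ring].
Qed.

Lemma denom_S_neq0 (n : nat) : denom p alpha (S n) <> 0.
Proof. apply Rgt_not_eq, denom_pos; auto with arith. Qed.

Lemma urn_conservation (n : nat) :
  sum1 (fun j => INR j * mean n j) (S n) = INR (S n) /\
  sum1 (fun j => mean n j) (S n) = p * INR n + 1.
Proof.
  induction n as [|n [Hpins Hballs]].
  - cbn [sum1]. rewrite mean_urn_dist_0. cbn [Nat.eqb INR]. split; ring.
  - assert (Hnext : mean n (S (S n)) = 0) by (apply mean_urn_dist_out_of_range; lia).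
    rewrite urn_dist_S, pins_expect_step, sum_expect_step, weight_urn_dist,
      (outflow_total p alpha n _ (denom_S_neq0 n) Hpins Hballs).
    change (sum1 ?f (S (S n))) with (sum1 f (S n) + f (S (S n))). cbv beta.
    rewrite Hpins, Hballs, Hnext, !S_INR. split; ring.
Qed.

Lemma urn_outflow_total (n : nat) :
  sum1 (outflow p alpha (S n) (urn_dist p alpha n)) (S n) = 1 - p.
Proof.
  destruct (urn_conservation n) as [Hpins Hballs].
  exact (outflow_total p alpha n _ (denom_S_neq0 n) Hpins Hballs).
Qed.

Lemma mean_urn_dist_1 (n : nat) :
  mean (S n) 1 = (1 - choose_rate p alpha (S n) 1) * mean n 1 + p.
Proof.
  rewrite mean_urn_dist_S, urn_outflow_total. cbn [Nat.eqb Nat.sub].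
  rewrite (outflow_out_of_range _ _ _ _ 0) by lia.
  unfold outflow. destruct (in_rangeP (S n) 1); [ring | lia].
Qed.

Lemma mean_urn_dist_succ (m n : nat) : (S m <= n)%nat ->
  mean (S n) (S (S m)) =
  (1 - choose_rate p alpha (S n) (S (S m))) * mean n (S (S m))
  + choose_rate p alpha (S n) (S m) * mean n (S m).
Proof.
  intros Hmn. rewrite mean_urn_dist_S. unfold outflow. cbn [Nat.eqb Nat.sub].
  destruct (in_rangeP (S n) (S (S m))), (in_rangeP (S n) (S m)); [ring | lia ..].
Qed.

Lemma mean_urn_dist_limit (m : nat) :
  is_lim_seq (fun n => mean n (S m) / INR (S n)) (fpos p alpha m).
Proof.
  pose proof (beta_pos p alpha Hp Halpha) as Hbeta.
  assert (Hrate : forall n i, (1 <= i)%nat -> 0 <= choose_rate p alpha (S n) i)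
    by (intros n i Hi; apply choose_rate_nonneg; auto; apply denom_pos; auto with arith).
  induction m as [|m IH].
  - apply (linear_recurrence_limit (fun n => mean n 1) (fun n => choose_rate p alpha (S n) 1)
             (fun _ => p) (beta p alpha * (INR 1 + alpha)) p _ 0).
    + intros n _. apply mean_urn_dist_1.
    + intros n. apply Hrate. lia.
    + apply is_lim_seq_scaled_choose_rate; assumption.
    + apply is_lim_seq_const.
    + cbn [fpos INR].
      assert (0 < beta p alpha * (1 + alpha)) by (apply Rmult_lt_0_compat; lra).
      field. lra.
  - apply (linear_recurrence_limit (fun n => mean n (S (S m)))
             (fun n => choose_rate p alpha (S n) (S (S m)))
             (fun n => choose_rate p alpha (S n) (S m) * mean n (S m))
             (beta p alpha * (INR (S (S m)) + alpha))
             (beta p alpha * (INR (S m) + alpha) * fpos p alpha m) _ (S m)).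
    + apply mean_urn_dist_succ.
    + intros n. apply Hrate. lia.
    + apply is_lim_seq_scaled_choose_rate; assumption.
    + apply (is_lim_seq_ext (fun n => INR (S n) * choose_rate p alpha (S n) (S m)
                                      * (mean n (S m) / INR (S n)))).
      { intros n. pose proof (INR_S_pos n). field. lra. }
      exact (is_lim_seq_mult' _ _ _ _ (is_lim_seq_scaled_choose_rate p alpha (S m) Hp Halpha) IH).
    + cbn [fpos]. rewrite (S_INR (S m)).
      assert (1 <= INR (S m)) by (apply (le_INR 1); lia).
      assert (0 < beta p alpha * (INR (S m) + 1 + alpha)) by (apply Rmult_lt_0_compat; lra).
      field. lra.
Qed.

End UrnModel.

(* Only expectations enter, and they obey a linear recursion whatever the signs
   of the weights. *)
Theorem theoremA4 (p alpha : R) :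
  0 < p < 1 -> -1 < alpha -> well_defined p alpha ->
  forall i : nat, (1 <= i)%nat ->
    is_lim_seq (fun n : nat => expect i (urn_dist p alpha n) / INR (S n))
               (Finite (f_lim p alpha i)).
Proof.
  intros Hp Halpha _ [|m] Hi; [lia |].
  unfold f_lim. rewrite Nat.sub_succ, Nat.sub_0_r.
  exact (mean_urn_dist_limit p alpha Hp Halpha m).
Qed.
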